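(* Let $n \geq 2$ and $d_1,d_2 \geq 1$ be integers, let $\mathcal{X}_1, \mathcal{X}_2$ be vector spaces over a field $\mathbb{F}$, and for each $a \in \{1,\dots,n\}$ let $x_{a,1} \in \mathcal{X}_1$ and $x_{a,2} \in \mathcal{X}_2$ be non-zero vectors. Suppose that for each $j \in \{1,2\}$, $$\dim\operatorname{span}\{x_{a,j} : a \in \{1,\dots,n\}\}\geq d_j.$$ If $n+1 \leq d_1+d_2$, then $$\sum_{a =1}^n x_{a,1}\otimes x_{a,2}\neq 0.$$ *)

From HB Require Import structures.
From mathcomp Require Import all_boot all_order all_algebra.
Set Implicit Arguments. Unset Strict Implicit. Unset Printing Implicit Defensive.
Import Order.TTheory GRing.Theory Num.Theory.
Local Open Scope ring_scope.

Definition in_span (F : fieldType) (X : lmodType F) (n : nat)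
    (x : 'I_n -> X) (v : X) : Prop :=
  exists c : 'I_n -> F, v = \sum_(a < n) c a *: x a.

Definition lin_indep (F : fieldType) (X : lmodType F) (k : nat)
    (v : 'I_k -> X) : Prop :=
  forall c : 'I_k -> F, \sum_(i < k) c i *: v i = 0 -> forall i, c i = 0.

Definition span_dim_ge (F : fieldType) (X : lmodType F) (n : nat)
    (x : 'I_n -> X) (d : nat) : Prop :=
  exists v : 'I_d -> X, (forall i, in_span x (v i)) /\ lin_indep v.

Definition bilinear_map (F : fieldType) (X1 X2 W : lmodType F)
    (B : X1 -> X2 -> W) : Prop :=
  (forall (c : F) (u u' : X1) (w : X2), B (c *: u + u') w = c *: B u w + B u' w) /\
  (forall (c : F) (u : X1) (w w' : X2), B u (c *: w + w') = c *: B u w + B u w').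

(* Defined through the
   universal property of the tensor product: an element of X1 (x) X2 is zero iff
   it is killed by (the linear map induced by) every bilinear map out of X1 x X2. *)
Definition tensor_sum_eq0 (F : fieldType) (X1 X2 : lmodType F) (n : nat)
    (x1 : 'I_n -> X1) (x2 : 'I_n -> X2) : Prop :=
  forall (W : lmodType F) (B : X1 -> X2 -> W),
    bilinear_map B -> \sum_(a < n) B (x1 a) (x2 a) = 0.

From HB Require Import structures.
From mathcomp Require Import all_boot all_order all_algebra.
From mathcomp Require Import boolp classical_sets.
Set Implicit Arguments. Unset Strict Implicit. Unset Printing Implicit Defensive.
Import Order.TTheory GRing.Theory Num.Theory.
Local Open Scope ring_scope.
Local Open Scope classical_set_scope.

(* Choose linear functionals phi_1, ..., phi_d1 on X1 dual to d1 independent vectors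
   of span {x_a1}, and psi_1, ..., psi_d2 on X2 likewise; extending them from the span
   to the whole space needs Zorn's lemma, as X1 and X2 may be infinite-dimensional.
   The matrices A = (phi_j (x_a1))_(j,a) and P = (psi_k (x_a2))_(k,a) have ranks at
   least d1 and d2, and the bilinear maps (u, w) |-> phi_j u * psi_k w kill a vanishing
   tensor, i.e. P A^T = 0.  So the row spaces of A and P are orthogonal in F^n, whence
   d1 + d2 <= rank A + rank P <= n. *)

Section LinearExtension.
Variables (F : fieldType) (X Y : lmodType F).

Definition linear_graph (G : set (X * Y)) :=
  G (0, 0) /\ forall c u s v t, G (u, s) -> G (v, t) -> G (c *: u + v, c *: s + t).

Definition single_valued (G : set (X * Y)) := forall s, G (0, s) -> s = 0.

Lemma linear_graph_functional G u s t : linear_graph G -> single_valued G ->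
  G (u, s) -> G (u, t) -> s = t.
Proof.
move=> [_ linG] svG Gus Gut; apply/eqP; rewrite -subr_eq0; apply/eqP/svG.
by have := linG (-1) _ _ _ _ Gut Gus; rewrite !scaleN1r addNr addrC.
Qed.

Lemma linear_graph_adjoin G u : linear_graph G -> single_valued G ->
  ~ (exists s, G (u, s)) ->
  exists H, [/\ G `<` H, linear_graph H & single_valued H].
Proof.
move=> [G00 linG] svG Gu.
exists [set p | exists v s t, G (v, s) /\ p = (v + t *: u, s)]; split.
- split=> [[v s] Gvs|GH]; first by exists v, s, 0; rewrite scale0r addr0.
  apply: Gu; exists 0; apply: GH.
  by exists 0, 0, 1; rewrite scale1r add0r.
- split; first by exists 0, 0, 0; rewrite scale0r addr0.
  move=> c _ _ _ _ [v [s [t [Gvs [-> ->]]]]] [v' [s' [t' [Gvs' [-> ->]]]]].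
  exists (c *: v + v'), (c *: s + s'), (c * t + t'); split; first exact: linG.
  by rewrite scalerDr scalerA scalerDl addrACA.
- move=> _ [v [s [t [Gvs [/esym/eqP + ->]]]]].
  rewrite addr_eq0 => /eqP vE.
  have [t0|tN0] := eqVneq t 0.
    by apply: svG; rewrite vE t0 scale0r oppr0 in Gvs.
  exfalso; apply: Gu; exists (- t^-1 *: s).
  have -> : u = - t^-1 *: v + 0.
    by rewrite vE scalerN scaleNr opprK scalerA mulVf // scale1r addr0.
  by rewrite -[_ *: s]addr0; apply: linG.
Qed.

Lemma maximal_linear_graph G0 : linear_graph G0 -> single_valued G0 ->
  exists G, [/\ G0 `<=` G, linear_graph G, single_valued G &
    forall H, G `<` H -> linear_graph H -> ~ single_valued H].
Proof.
move=> linG0 svG0.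
(* Working with A `|` G0 rather than A gives the empty chain an upper bound. *)
pose P A := linear_graph (A `|` G0) /\ single_valued (A `|` G0).
have [A [[linA svA] maxA]] : exists A, P A /\ forall B, A `<` B -> ~ P B.
  apply: Zorn_bigcup => C CP chainC.
  set U := \bigcup_(Z in C) Z.
  have common p q : (U `|` G0) p -> (U `|` G0) q ->
      exists Z, [/\ P Z, Z `<=` U, (Z `|` G0) p & (Z `|` G0) q].
    move=> [[Z CZ Zp]|G0p] [[Z' CZ' Z'q]|G0q].
    - have [ZZ'|Z'Z] := chainC _ _ CZ CZ'.
        by exists Z'; split; [exact: CP|exact: bigcup_sup|left; exact: ZZ'|left].
      by exists Z; split; [exact: CP|exact: bigcup_sup|left|left; exact: Z'Z].
    - by exists Z; split; [exact: CP|exact: bigcup_sup|left|right].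
    - by exists Z'; split; [exact: CP|exact: bigcup_sup|right|left].
    - by exists set0; split; [rewrite /P set0U|by []|right|right].
  split; [split|].
  - by right; case: linG0.
  - move=> c u s v t /common /[apply] -[Z [[[_ linZ] _] ZU Zus Zvt]].
    exact: (setSU ZU) (linZ c u s v t Zus Zvt).
  - by move=> s /[dup] /common /[apply] -[Z [[_ svZ] _ Zs _]]; apply: svZ.
exists (A `|` G0); split=> //.
move=> H [GH HG] linH svH; apply: (maxA H); last first.
  suff HG0 : H `|` G0 = H by rewrite /P HG0.
  by apply/setUidPl => p G0p; apply: GH; right.
split=> [p Ap|HA]; first by apply: GH; left.
by apply: HG => p /HA Ap; left.
Qed.

Lemma linear_graph_extend G0 : linear_graph G0 -> single_valued G0 ->
  exists f : {linear X -> Y}, forall u s, G0 (u, s) -> f u = s.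
Proof.
move=> linG0 svG0.
have [G [G0G linG svG maxG]] := maximal_linear_graph linG0 svG0.
have /choice [f Gf] : forall u, exists s, G (u, s).
  move=> u; apply: contrapT => Gu.
  have [H [GH linH svH]] := linear_graph_adjoin linG svG Gu.
  exact: maxG GH linH svH.
have flin : linear f.
  move=> c u v; apply: (linear_graph_functional linG svG (Gf _)).
  exact: linG.2 _ _ _ _ _ (Gf u) (Gf v).
exists (HB.pack_for {linear X -> Y} f (GRing.isLinear.Build _ _ _ _ f flin)).
move=> u s G0us /=.
exact: linear_graph_functional linG svG (Gf u) (G0G _ G0us).
Qed.

Lemma lin_indep_extend k (v : 'I_k -> X) (y : 'I_k -> Y) : lin_indep v ->
  exists f : {linear X -> Y}, forall i, f (v i) = y i.
Proof.
move=> indv.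
have combE (Z : lmodType F) (w : 'I_k -> Z) c t t' :
    \sum_i (c * t i + t' i) *: w i = c *: \sum_i t i *: w i + \sum_i t' i *: w i.
  rewrite scaler_sumr -big_split; apply: eq_bigr => i _.
  by rewrite scalerDl scalerA.
pose G0 p := exists t : 'I_k -> F, p = (\sum_i t i *: v i, \sum_i t i *: y i).
have [||f G0f] := @linear_graph_extend G0.
- split; first by exists (fun=> 0); rewrite !big1 // => i _; rewrite scale0r.
  move=> c _ _ _ _ [t [-> ->]] [t' [-> ->]].
  by exists (fun i => c * t i + t' i); rewrite !combE.
- move=> _ [t [/esym tv0 ->]].
  by rewrite big1 // => i _; rewrite (indv _ tv0) scale0r.
exists f => i; apply: G0f; exists (fun j => (j == i)%:R).
have deltaE (Z : lmodType F) (w : 'I_k -> Z) : \sum_j (j == i)%:R *: w j = w i.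
  rewrite (bigD1 i) //= eqxx scale1r big1 ?addr0 // => j /negbTE ->.
  by rewrite scale0r.
by rewrite !deltaE.
Qed.

End LinearExtension.

Section FunctionalMatrices.
Variable F : fieldType.

Definition eval_mx (X : lmodType F) d n (phi : 'I_d -> X -> F) (x : 'I_n -> X) :
  'M[F]_(d, n) := \matrix_(j, a) phi j (x a).

Lemma span_dim_ge_eval_mx (X : lmodType F) n (x : 'I_n -> X) d : span_dim_ge x d ->
  exists phi : 'I_d -> {linear X -> F^o}, (d <= \rank (eval_mx phi x))%N.
Proof.
move=> [v [spanv indv]].
have /choice [phi phiv] (j : 'I_d) :
    exists phi : {linear X -> F^o}, forall i, phi (v i) = (i == j)%:R.
  exact: lin_indep_extend.
have /choice [C vC] := spanv.
exists phi.
have CA : \matrix_(i, a) C i a *m (eval_mx phi x)^T = 1%:M.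
  apply/matrixP => i j; rewrite !mxE -phiv vC linear_sum.
  by apply: eq_bigr => a _; rewrite !mxE linearZ.
by rewrite -mxrank_tr -[X in (X <= _)%N](mxrank1 F d) -CA mxrankM_maxr.
Qed.

Lemma tensor_sum_eq0_eval_mx (X1 X2 : lmodType F) n
    (x1 : 'I_n -> X1) (x2 : 'I_n -> X2) d1 d2
    (phi : 'I_d1 -> {linear X1 -> F^o})
    (psi : 'I_d2 -> {linear X2 -> F^o}) :
  tensor_sum_eq0 x1 x2 -> eval_mx psi x2 *m (eval_mx phi x1)^T = 0.
Proof.
move=> x12_0; apply/matrixP => k j; rewrite !mxE.
have bil : bilinear_map (fun (u : X1) (w : X2) => (phi j u * psi k w : F^o)).
  split=> c u u' w; rewrite linearP /=; first by rewrite mulrDl scalerAl.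
  by rewrite mulrDr scalerAr.
rewrite -[RHS](x12_0 _ _ bil); apply: eq_bigr => a _.
by rewrite !mxE mulrC.
Qed.

Lemma mxrank_add_leq_orthogonal m1 m2 n (A : 'M[F]_(m1, n)) (B : 'M_(m2, n)) :
  B *m A^T = 0 -> (\rank A + \rank B <= n)%N.
Proof.
move=> /sub_kermxP/mxrankS; rewrite mxrank_ker mxrank_tr.
by rewrite leq_subRL // rank_leq_col.
Qed.

End FunctionalMatrices.

Theorem proposition1 (F : fieldType) (X1 X2 : lmodType F) (n d1 d2 : nat)
    (x1 : 'I_n -> X1) (x2 : 'I_n -> X2) :
  (2 <= n)%N -> (1 <= d1)%N -> (1 <= d2)%N ->
  (forall a, x1 a != 0) -> (forall a, x2 a != 0) ->
  span_dim_ge x1 d1 -> span_dim_ge x2 d2 ->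
  (n.+1 <= d1 + d2)%N ->
  ~ tensor_sum_eq0 x1 x2.
Proof.
move=> _ _ _ _ _ /span_dim_ge_eval_mx[phi le_d1] /span_dim_ge_eval_mx[psi le_d2].
move=> lt_n_d x12_0; have := tensor_sum_eq0_eval_mx phi psi x12_0.
move=> /mxrank_add_leq_orthogonal le_rank_n.
by have := leq_trans (leq_add le_d1 le_d2) le_rank_n; rewrite leqNgt lt_n_d.
Qed.
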